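(* Let $E=\mathcal O(0,1,1)\oplus\mathcal O(1,0,1)\oplus\mathcal O(1,1,0)$ on $\mathbb P^1\times\mathbb P^1\times\mathbb P^1$. The discriminant locus $\Delta\subseteq\mathbb P H^0(E)\cong\mathbb P^{11}$ of $E$ is an irreducible hypersurface of degree $6$.
   Context: The discriminant locus is $\Delta=\{[f]\in\mathbb P H^0(\mathbb P^1\times\mathbb P^1\times\mathbb P^1,E) : \mathcal Z(f)\text{ is not reduced of dimension }0\}$, where $\mathcal Z(f)$ is the zero scheme of $f$. A section is $f=(f^{(1)},f^{(2)},f^{(3)})$ with $f^{(i)}$ a bilinear form in the two coordinate pairs $\pi^{(l)}=(\pi^{(l)}_1,\pi^{(l)}_2)$, $l\ne i$. (This is the discriminant relevant to three-player games with two strategies each.) *)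

From HB Require Import structures.
From mathcomp Require Import all_boot all_order all_algebra.
From mathcomp Require Import mpoly.
Set Implicit Arguments. Unset Strict Implicit. Unset Printing Implicit Defensive.
Import GRing.Theory Num.Theory.
Local Open Scope ring_scope.

(* Coordinates on H^0(P^1 x P^1 x P^1, E) = C^12.
   A section is f = (f^(1), f^(2), f^(3)); f^(i) is bilinear in the two
   coordinate pairs pi^(j), pi^(k) with {j < k} = {1,2,3} \ {i}:
     f^(i)(x, y) = \sum_{a,b} v (vidx i a b) * x_a * y_b.
   (indices are 0-based here). *)
Definition vidx (i : 'I_3) (a b : 'I_2) : 'I_12 := inord (4 * i + 2 * a + b).

Definition oth1 (i : 'I_3) : 'I_3 := if val i == 0%N then inord 1 else inord 0.
Definition oth2 (i : 'I_3) : 'I_3 := if val i == 2%N then inord 1 else inord 2.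

(* a point of (P^1)^3 given by homogeneous coordinates p l = pi^(l) *)
Definition Pt (C : nzRingType) := 'I_3 -> 'I_2 -> C.

Definition bil (C : nzRingType) (v : 'I_12 -> C) (i : 'I_3) (x y : 'I_2 -> C) : C :=
  \sum_(a < 2) \sum_(b < 2) v (vidx i a b) * x a * y b.

Definition fsec (C : nzRingType) (v : 'I_12 -> C) (i : 'I_3) (p : Pt C) : C :=
  bil v i (p (oth1 i)) (p (oth2 i)).

Definition is_zero (C : nzRingType) (v : 'I_12 -> C) (p : Pt C) : Prop :=
  (forall l : 'I_3, exists a : 'I_2, p l a != 0) /\ (forall i, fsec v i p = 0).

Definition proj_eq (C : nzRingType) (p q : Pt C) : Prop :=
  forall l : 'I_3, exists c : C, c != 0 /\ forall a, q l a = c * p l a.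

Definition dfsec (C : nzRingType) (v : 'I_12 -> C) (i : 'I_3) (p u : Pt C) : C :=
  bil v i (u (oth1 i)) (p (oth2 i)) + bil v i (p (oth1 i)) (u (oth2 i)).

(* Zariski tangent space of Z(f) at p is zero: every homogeneous tangent
   vector killed by df_p is in the span of the Euler directions, i.e. is
   zero in T_p (P^1)^3 = (+)_l C^2 / <p l>. *)
Definition reduced_at (C : nzRingType) (v : 'I_12 -> C) (p : Pt C) : Prop :=
  forall u : Pt C, (forall i, dfsec v i p u = 0) ->
    forall l : 'I_3, exists c : C, forall a, u l a = c * p l a.

Definition zero_dim_reduced (C : nzRingType) (v : 'I_12 -> C) : Prop :=
  [/\ exists p, is_zero v p,
      exists (n : nat) (S : 'I_n -> Pt C),
        forall p, is_zero v p -> exists k, proj_eq (S k) p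
    & forall p, is_zero v p -> reduced_at v p].

Definition in_discriminant (C : nzRingType) (v : 'I_12 -> C) : Prop :=
  ~ zero_dim_reduced v.

Definition mirreducible (C : nzRingType) (n : nat) (D : {mpoly C[n]}) : Prop :=
  (1 < msize D)%N /\
  forall q r : {mpoly C[n]}, D = q * r -> (msize q <= 1)%N \/ (msize r <= 1)%N.

From HB Require Import structures.
From mathcomp Require Import all_boot all_order all_algebra.
From mathcomp Require Import mpoly.
From mathcomp Require Import ring zify.
From Stdlib Require Import Classical_Prop.
Import GRing.Theory Num.Theory.
Local Open Scope ring_scope.
Set Implicit Arguments. Unset Strict Implicit.

(* Write [x], [y], [z] for the coordinates on the three factors, so that f^(1), f^(2),
   f^(3) are bilinear in (y, z), (x, z), (x, y).  For fixed [z], f^(1)(., z) = 0 and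
   f^(2)(., z) = 0 determine [y] and [x] (linearly in [z], up to scale), and f^(3) of
   these is a binary quadratic form q(z) whose coefficients k0, k1, k2 are cubic in the
   section.  Hence the zeros of [f] lie over the roots of [q], one over each root when
   [q] has distinct roots.  At a zero, the Zariski tangent space is cut out by a 3x3
   linear system whose determinant K satisfies grad q(z) = K (-z1, z0).  So Z(f) is
   reduced of dimension 0 iff [q] has two simple roots, i.e. iff the discriminant
   D = k1^2 - 4 k0 k2 is nonzero.  D has degree 2 in each of the three blocks of four
   coordinates.  If D = f g nontrivially, passing to leading forms for the total and the
   three block degrees gives a factorisation into trihomogeneous factors.  A factor of
   block degree 1 in some block is impossible, since on a suitable plane of that block D
   restricts to the smooth conic b^2 - 4 a d; a factor involving a single block is
   impossible, since D(c, s) D(c', s') <> D(c', s) D(c, s') for suitable values. *)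

Section QuadraticForm.
Variables (R : comNzRingType) (v : 'I_12 -> R).
Local Notation V k := (v (inord k)).

Definition sec0 (y0 y1 z0 z1 : R) :=
  V 0 * y0 * z0 + V 1 * y0 * z1 + (V 2 * y1 * z0 + V 3 * y1 * z1).
Definition sec1 (x0 x1 z0 z1 : R) :=
  V 4 * x0 * z0 + V 5 * x0 * z1 + (V 6 * x1 * z0 + V 7 * x1 * z1).
Definition sec2 (x0 x1 y0 y1 : R) :=
  V 8 * x0 * y0 + V 9 * x0 * y1 + (V 10 * x1 * y0 + V 11 * x1 * y1).

Definition qcoef0 := V 2*V 6*V 8 - V 2*V 4*V 10 - V 0*V 6*V 9 + V 0*V 4*V 11.
Definition qcoef1 := V 3*V 6*V 8 - V 3*V 4*V 10 + V 2*V 7*V 8 - V 2*V 5*V 10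
  - V 1*V 6*V 9 + V 1*V 4*V 11 - V 0*V 7*V 9 + V 0*V 5*V 11.
Definition qcoef2 := V 3*V 7*V 8 - V 3*V 5*V 10 - V 1*V 7*V 9 + V 1*V 5*V 11.

Definition qform (z0 z1 : R) := qcoef0 * z0 ^+ 2 + qcoef1 * z0 * z1 + qcoef2 * z1 ^+ 2.
Definition qgrad0 (z0 z1 : R) := 2%:R * qcoef0 * z0 + qcoef1 * z1.
Definition qgrad1 (z0 z1 : R) := qcoef1 * z0 + 2%:R * qcoef2 * z1.
Definition discr := qcoef1 ^+ 2 - 4%:R * qcoef0 * qcoef2.

(* [(-(V 6 z0 + V 7 z1), V 4 z0 + V 5 z1)] and [(-(V 2 z0 + V 3 z1), V 0 z0 + V 1 z1)]
   solve [sec1 (.) z = 0] and [sec0 (.) z = 0]; [qform] is [sec2] evaluated on them. *)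
Lemma qform_sec2 z0 z1 : qform z0 z1 =
  sec2 (-(V 6*z0 + V 7*z1)) (V 4*z0 + V 5*z1) (-(V 2*z0 + V 3*z1)) (V 0*z0 + V 1*z1).
Proof. rewrite /qform /sec2 /qcoef0 /qcoef1 /qcoef2; ring. Qed.

Lemma qform_euler z0 z1 : z0 * qgrad0 z0 z1 + z1 * qgrad1 z0 z1 = 2%:R * qform z0 z1.
Proof. rewrite /qform /qgrad0 /qgrad1; ring. Qed.

Lemma discr_mulz0 z0 z1 : discr * z0 = qcoef1 * qgrad1 z0 z1 - 2%:R * qcoef2 * qgrad0 z0 z1.
Proof. rewrite /discr /qgrad0 /qgrad1; ring. Qed.

Lemma discr_mulz1 z0 z1 : discr * z1 = qcoef1 * qgrad0 z0 z1 - 2%:R * qcoef0 * qgrad1 z0 z1.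
Proof. rewrite /discr /qgrad0 /qgrad1; ring. Qed.

Lemma qcoef_interpolation z0 z1 w0 w1 t0 t1 :
  let det2 a b c d := a * d - b * c in
  let vdm := (z0*w1 - z1*w0) * (z0*t1 - z1*t0) * (w0*t1 - w1*t0) in
  [/\ vdm * qcoef0 = det2 (w0*w1) (w1^+2) (t0*t1) (t1^+2) * qform z0 z1
        - det2 (z0*z1) (z1^+2) (t0*t1) (t1^+2) * qform w0 w1
        + det2 (z0*z1) (z1^+2) (w0*w1) (w1^+2) * qform t0 t1,
      vdm * qcoef1 = - det2 (w0^+2) (w1^+2) (t0^+2) (t1^+2) * qform z0 z1
        + det2 (z0^+2) (z1^+2) (t0^+2) (t1^+2) * qform w0 w1
        - det2 (z0^+2) (z1^+2) (w0^+2) (w1^+2) * qform t0 t1 &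
      vdm * qcoef2 = det2 (w0^+2) (w0*w1) (t0^+2) (t0*t1) * qform z0 z1
        - det2 (z0^+2) (z0*z1) (t0^+2) (t0*t1) * qform w0 w1
        + det2 (z0^+2) (z0*z1) (w0^+2) (w0*w1) * qform t0 t1].
Proof. rewrite /qform /=; split; ring. Qed.

Lemma linform_det (l0 l1 c p0 p1 a0 a1 : R) : l0 - c * p1 = 0 -> l1 + c * p0 = 0 ->
  a0 * l0 + a1 * l1 = c * (a0 * p1 - a1 * p0).
Proof.
move=> e0 e1.
have -> : a0 * l0 + a1 * l1 = a0 * (l0 - c * p1) + a1 * (l1 + c * p0) + c * (a0 * p1 - a1 * p0).
  by ring.
by rewrite e0 e1 !mulr0 !add0r.
Qed.

(* At a zero [(x, y, z)] of [f], each of the six linear forms [sec_i (.) b] obtained by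
   fixing one argument is [c det(., a)], [a] being the other coordinate pair of [sec_i];
   the record stores the six factors [c]. *)
Record multipliers (x0 x1 y0 y1 z0 z1 al be ga de ep ze : R) : Prop := {
  m1a : V 0*z0 + V 1*z1 - al*y1 = 0;  m1b : V 2*z0 + V 3*z1 + al*y0 = 0;
  m2a : V 0*y0 + V 2*y1 - be*z1 = 0;  m2b : V 1*y0 + V 3*y1 + be*z0 = 0;
  m3a : V 4*z0 + V 5*z1 - ga*x1 = 0;  m3b : V 6*z0 + V 7*z1 + ga*x0 = 0;
  m4a : V 4*x0 + V 6*x1 - de*z1 = 0;  m4b : V 5*x0 + V 7*x1 + de*z0 = 0;
  m5a : V 8*y0 + V 9*y1 - ep*x1 = 0;  m5b : V 10*y0 + V 11*y1 + ep*x0 = 0;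
  m6a : V 8*x0 + V 10*x1 - ze*y1 = 0; m6b : V 9*x0 + V 11*x1 + ze*y0 = 0 }.

Definition tangent_det (al be ga de ep ze : R) := al * de * ep + be * ga * ze.

Section Multipliers.
Variables x0 x1 y0 y1 z0 z1 al be ga de ep ze : R.
Hypothesis HM : multipliers x0 x1 y0 y1 z0 z1 al be ga de ep ze.
Local Notation K := (tangent_det al be ga de ep ze).

Local Ltac zero_residuals := case: HM => *;
  repeat match goal with H : _ = 0 |- _ => rewrite ?H; clear H end; rewrite /sec2; ring.

(* The gradient of [qform] at [z] is [K (-z1, z0)]: [K] vanishes iff [z] is a multiple root. *)
Lemma qgrad0_multipliers : qgrad0 z0 z1 + K * z1 = 0.
Proof.
have -> : qgrad0 z0 z1 + K * z1 =
    - (al*ep) * (V 4*x0 + V 6*x1 - de*z1)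
    + al * (- V 6 * (V 8*y0 + V 9*y1 - ep*x1) + V 4 * (V 10*y0 + V 11*y1 + ep*x0))
    + sec2 (- V 6) (V 4) (- (V 2*z0 + V 3*z1 + al*y0)) (V 0*z0 + V 1*z1 - al*y1)
    - ga*ze * (V 0*y0 + V 2*y1 - be*z1)
    + ga * (- V 2 * (V 8*x0 + V 10*x1 - ze*y1) + V 0 * (V 9*x0 + V 11*x1 + ze*y0))
    + sec2 (- (V 6*z0 + V 7*z1 + ga*x0)) (V 4*z0 + V 5*z1 - ga*x1) (- V 2) (V 0).
  by rewrite /qgrad0 /tangent_det /sec2 /qcoef0 /qcoef1; ring.
zero_residuals.
Qed.

Lemma qgrad1_multipliers : qgrad1 z0 z1 - K * z0 = 0.
Proof.
have -> : qgrad1 z0 z1 - K * z0 =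
    - (al*ep) * (V 5*x0 + V 7*x1 + de*z0)
    + al * (- V 7 * (V 8*y0 + V 9*y1 - ep*x1) + V 5 * (V 10*y0 + V 11*y1 + ep*x0))
    + sec2 (- V 7) (V 5) (- (V 2*z0 + V 3*z1 + al*y0)) (V 0*z0 + V 1*z1 - al*y1)
    - ga*ze * (V 1*y0 + V 3*y1 + be*z0)
    + ga * (- V 3 * (V 8*x0 + V 10*x1 - ze*y1) + V 1 * (V 9*x0 + V 11*x1 + ze*y0))
    + sec2 (- (V 6*z0 + V 7*z1 + ga*x0)) (V 4*z0 + V 5*z1 - ga*x1) (- V 3) (V 1).
  by rewrite /qgrad1 /tangent_det /sec2 /qcoef1 /qcoef2; ring.
zero_residuals.
Qed.

Lemma qform_multipliers : sec2 x0 x1 y0 y1 = 0 -> qform z0 z1 = 0.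
Proof.
move=> h2; have -> : qform z0 z1 = ga * al * sec2 x0 x1 y0 y1
    + ga * sec2 x0 x1 (- (V 2*z0 + V 3*z1 + al*y0)) (V 0*z0 + V 1*z1 - al*y1)
    + al * sec2 (- (V 6*z0 + V 7*z1 + ga*x0)) (V 4*z0 + V 5*z1 - ga*x1) y0 y1
    + sec2 (- (V 6*z0 + V 7*z1 + ga*x0)) (V 4*z0 + V 5*z1 - ga*x1)
           (- (V 2*z0 + V 3*z1 + al*y0)) (V 0*z0 + V 1*z1 - al*y1).
  by rewrite qform_sec2 /sec2; ring.
rewrite h2; zero_residuals.
Qed.

Lemma sec0_z a0 a1 : sec0 a0 a1 z0 z1 = al * (a0 * y1 - a1 * y0).
Proof. by rewrite -(linform_det _ _ (m1a HM) (m1b HM)) /sec0; ring. Qed.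
Lemma sec0_y a0 a1 : sec0 y0 y1 a0 a1 = be * (a0 * z1 - a1 * z0).
Proof. by rewrite -(linform_det _ _ (m2a HM) (m2b HM)) /sec0; ring. Qed.
Lemma sec1_z a0 a1 : sec1 a0 a1 z0 z1 = ga * (a0 * x1 - a1 * x0).
Proof. by rewrite -(linform_det _ _ (m3a HM) (m3b HM)) /sec1; ring. Qed.
Lemma sec1_x a0 a1 : sec1 x0 x1 a0 a1 = de * (a0 * z1 - a1 * z0).
Proof. by rewrite -(linform_det _ _ (m4a HM) (m4b HM)) /sec1; ring. Qed.
Lemma sec2_y a0 a1 : sec2 a0 a1 y0 y1 = ep * (a0 * x1 - a1 * x0).
Proof. by rewrite -(linform_det _ _ (m5a HM) (m5b HM)) /sec2; ring. Qed.
Lemma sec2_x a0 a1 : sec2 x0 x1 a0 a1 = ze * (a0 * y1 - a1 * y0).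
Proof. by rewrite -(linform_det _ _ (m6a HM) (m6b HM)) /sec2; ring. Qed.

End Multipliers.
End QuadraticForm.

Section Pairs.
Variable F : fieldType.

Definition nonzero2 (a0 a1 : F) := (a0 != 0) || (a1 != 0).

Lemma orthogonal_pair (a0 a1 w0 w1 : F) : nonzero2 a0 a1 -> a0 * w0 + a1 * w1 = 0 ->
  exists c, w0 - c * a1 = 0 /\ w1 + c * a0 = 0.
Proof.
case/orP => [h|h] e.
- exists (- w1 / a0); split; last by field.
  by apply: (mulfI h); rewrite mulr0 -e; field.
- exists (w0 / a1); split; first by field.
  by apply: (mulfI h); rewrite mulr0 -e; field.
Qed.

Lemma orthogonal_exists (w0 w1 : F) : exists a0 a1, nonzero2 a0 a1 /\ a0 * w0 + a1 * w1 = 0.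
Proof.
have [h|] := boolP (nonzero2 w0 w1).
- exists (- w1), w0; split; last by ring.
  by move: h; rewrite /nonzero2 oppr_eq0 orbC.
- rewrite negb_or !negbK => /andP[/eqP -> /eqP ->].
  by exists 1, 0; rewrite /nonzero2 oner_eq0; split=> //; ring.
Qed.

Lemma det2_eq0_multiple (a0 a1 b0 b1 : F) : nonzero2 a0 a1 -> b0 * a1 - b1 * a0 = 0 ->
  exists c, b0 = c * a0 /\ b1 = c * a1.
Proof.
case/orP => [h|h] /eqP; rewrite subr_eq0 => /eqP e.
- exists (b0 / a0); split; first by field.
  by rewrite -[b1](mulfK h) -e; field.
- exists (b1 / a1); split; last by field.
  by rewrite -[b0](mulfK h) e; field.
Qed.

Lemma multiple_scale_neq0 (a0 a1 b0 b1 c : F) :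
  nonzero2 b0 b1 -> b0 = c * a0 -> b1 = c * a1 -> c != 0.
Proof.
by move=> h e0 e1; apply: contraTneq h => c0; rewrite /nonzero2 e0 e1 c0 !mul0r eqxx.
Qed.

Definition proportional2 (a0 a1 b0 b1 : F) := exists c, [/\ c != 0, b0 = c * a0 & b1 = c * a1].

Lemma det2_eq0_proportional (a0 a1 b0 b1 : F) :
  nonzero2 a0 a1 -> nonzero2 b0 b1 -> b0 * a1 - b1 * a0 = 0 -> proportional2 a0 a1 b0 b1.
Proof.
move=> ha hb /(det2_eq0_multiple ha) [c [e0 e1]].
by exists c; split=> //; apply: multiple_scale_neq0 hb e0 e1.
Qed.

Lemma nonzero2_mul_eq0 (a0 a1 c : F) : nonzero2 a0 a1 -> c * a0 = 0 -> c * a1 = 0 -> c = 0.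
Proof.
case/orP => h /eqP h0 /eqP h1; apply/eqP.
- by move: h0; rewrite mulf_eq0 (negbTE h) orbF.
- by move: h1; rewrite mulf_eq0 (negbTE h) orbF.
Qed.

Lemma det_eq1_exists (a0 a1 : F) : nonzero2 a0 a1 -> exists e0 e1, e0 * a1 - e1 * a0 = 1.
Proof.
case/orP => h.
- by exists 0, (- a0^-1); rewrite mul0r sub0r mulNr opprK mulVf.
- by exists a1^-1, 0; rewrite mul0r subr0 mulVf.
Qed.

End Pairs.

Section TangentSystem.
Variable F : fieldType.
Variables al be ga de ep ze : F.

Lemma tangent_system_trivial (wx wy wz : F) : tangent_det al be ga de ep ze != 0 ->
  al * wy + be * wz = 0 -> ga * wx + de * wz = 0 -> ep * wx + ze * wy = 0 ->
  [/\ wx = 0, wy = 0 & wz = 0].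
Proof.
rewrite /tangent_det; set K := _ + _ => hK e1 e2 e3.
have ex : K * wx = al*de*(ep*wx + ze*wy) + be*ze*(ga*wx + de*wz) - de*ze*(al*wy + be*wz).
  by rewrite /K; ring.
have ey : K * wy = de*ep*(al*wy + be*wz) + be*ga*(ep*wx + ze*wy) - be*ep*(ga*wx + de*wz).
  by rewrite /K; ring.
have ez : K * wz = al*ep*(ga*wx + de*wz) + ga*ze*(al*wy + be*wz) - al*ga*(ep*wx + ze*wy).
  by rewrite /K; ring.
rewrite e1 e2 e3 !mulr0 !subr0 addr0 in ex ey ez.
by split; apply: (mulfI hK); rewrite mulr0.
Qed.

Lemma tangent_system_nontrivial : tangent_det al be ga de ep ze = 0 ->
  exists wx wy wz : F, [/\ [|| wx != 0, wy != 0 | wz != 0],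
    al * wy + be * wz = 0, ga * wx + de * wz = 0 & ep * wx + ze * wy = 0].
Proof.
rewrite /tangent_det => hK.
have [a0|a0] := eqVneq al 0.
  have [z0|z0] := eqVneq ze 0.
    by exists 0, 1, 0; rewrite a0 z0 oner_eq0 orbT; split=> //; ring.
  have [g0|g0] := eqVneq ga 0.
    by exists ze, (- ep), 0; rewrite z0 a0 g0; split=> //; ring.
  have b0 : be = 0.
    by move/eqP: hK; rewrite a0 !mul0r add0r !mulf_eq0 (negbTE g0) (negbTE z0) !orbF => /eqP.
  exists (de * ze), (- (ep * de)), (- (ga * ze)); rewrite a0 b0; split; try ring.
  by rewrite !oppr_eq0 (mulf_neq0 g0 z0) !orbT.
have [g0|g0] := eqVneq ga 0.
  have [e0|e0] := eqVneq ep 0.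
    by exists 1, 0, 0; rewrite g0 e0 oner_eq0; split=> //; ring.
  have d0 : de = 0.
    by move/eqP: hK; rewrite g0 !mulr0 mul0r addr0 !mulf_eq0 (negbTE a0) (negbTE e0) !orbF => /eqP.
  exists (be * ze), (- (be * ep)), (al * ep); rewrite g0 d0; split; try ring.
  by rewrite (mulf_neq0 a0 e0) !orbT.
exists (al * de), (be * ga), (- (al * ga)); split; try ring.
- by rewrite !oppr_eq0 (mulf_neq0 a0 g0) !orbT.
- by rewrite -hK; ring.
Qed.

End TangentSystem.

Section Zeros.
Variables (F : fieldType) (v : 'I_12 -> F).
Local Notation V k := (v (inord k)).

Definition zero_coords (x0 x1 y0 y1 z0 z1 : F) :=
  [/\ nonzero2 x0 x1, nonzero2 y0 y1, nonzero2 z0 z1 &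
      [/\ sec0 v y0 y1 z0 z1 = 0, sec1 v x0 x1 z0 z1 = 0 & sec2 v x0 x1 y0 y1 = 0]].

Lemma multipliers_exist x0 x1 y0 y1 z0 z1 : zero_coords x0 x1 y0 y1 z0 z1 ->
  exists al be ga de ep ze, multipliers v x0 x1 y0 y1 z0 z1 al be ga de ep ze.
Proof.
case=> nx ny nz [e0 e1 e2].
have [al [a1 a2]] := @orthogonal_pair _ _ _ (V 0*z0 + V 1*z1) (V 2*z0 + V 3*z1) ny
  ltac:(by rewrite -e0 /sec0; ring).
have [be [b1 b2]] := @orthogonal_pair _ _ _ (V 0*y0 + V 2*y1) (V 1*y0 + V 3*y1) nz
  ltac:(by rewrite -e0 /sec0; ring).
have [ga [c1 c2]] := @orthogonal_pair _ _ _ (V 4*z0 + V 5*z1) (V 6*z0 + V 7*z1) nx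
  ltac:(by rewrite -e1 /sec1; ring).
have [de [d1 d2]] := @orthogonal_pair _ _ _ (V 4*x0 + V 6*x1) (V 5*x0 + V 7*x1) nz
  ltac:(by rewrite -e1 /sec1; ring).
have [ep [f1 f2]] := @orthogonal_pair _ _ _ (V 8*y0 + V 9*y1) (V 10*y0 + V 11*y1) nx
  ltac:(by rewrite -e2 /sec2; ring).
have [ze [h1 h2]] := @orthogonal_pair _ _ _ (V 8*x0 + V 10*x1) (V 9*x0 + V 11*x1) ny
  ltac:(by rewrite -e2 /sec2; ring).
by exists al, be, ga, de, ep, ze; split.
Qed.

Lemma tangent_det_neq0 x0 x1 y0 y1 z0 z1 al be ga de ep ze :
  multipliers v x0 x1 y0 y1 z0 z1 al be ga de ep ze -> nonzero2 z0 z1 -> discr v != 0 ->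
  tangent_det al be ga de ep ze != 0.
Proof.
move=> HM nz hD; apply: contra_neq hD => hK.
have g0 : qgrad0 v z0 z1 = 0 by rewrite -(qgrad0_multipliers HM) hK mul0r addr0.
have g1 : qgrad1 v z0 z1 = 0 by rewrite -(qgrad1_multipliers HM) hK mul0r subr0.
apply: (nonzero2_mul_eq0 nz).
- by rewrite (discr_mulz0 _ z0 z1) g0 g1; ring.
- by rewrite (discr_mulz1 _ z0 z1) g0 g1; ring.
Qed.

Section AtAZero.
Variables x0 x1 y0 y1 z0 z1 al be ga de ep ze : F.
Hypothesis HM : multipliers v x0 x1 y0 y1 z0 z1 al be ga de ep ze.

Lemma tangent_vector_trivial : tangent_det al be ga de ep ze != 0 ->
  forall ux0 ux1 uy0 uy1 uz0 uz1 : F,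
  sec0 v uy0 uy1 z0 z1 + sec0 v y0 y1 uz0 uz1 = 0 ->
  sec1 v ux0 ux1 z0 z1 + sec1 v x0 x1 uz0 uz1 = 0 ->
  sec2 v ux0 ux1 y0 y1 + sec2 v x0 x1 uy0 uy1 = 0 ->
  [/\ ux0 * x1 - ux1 * x0 = 0, uy0 * y1 - uy1 * y0 = 0 & uz0 * z1 - uz1 * z0 = 0].
Proof.
move=> hK ux0 ux1 uy0 uy1 uz0 uz1.
rewrite (sec0_z HM) (sec0_y HM) (sec1_z HM) (sec1_x HM) (sec2_y HM) (sec2_x HM).
exact: tangent_system_trivial.
Qed.

Lemma tangent_vector_nontrivial : tangent_det al be ga de ep ze = 0 ->
  nonzero2 x0 x1 -> nonzero2 y0 y1 -> nonzero2 z0 z1 ->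
  exists ux0 ux1 uy0 uy1 uz0 uz1 : F, [/\
    sec0 v uy0 uy1 z0 z1 + sec0 v y0 y1 uz0 uz1 = 0,
    sec1 v ux0 ux1 z0 z1 + sec1 v x0 x1 uz0 uz1 = 0,
    sec2 v ux0 ux1 y0 y1 + sec2 v x0 x1 uy0 uy1 = 0 &
    [|| ux0 * x1 - ux1 * x0 != 0, uy0 * y1 - uy1 * y0 != 0 | uz0 * z1 - uz1 * z0 != 0]].
Proof.
move=> hK nx ny nz.
have [wx [wy [wz [hW e1 e2 e3]]]] := tangent_system_nontrivial hK.
have [ex0 [ex1 hx]] := det_eq1_exists nx.
have [ey0 [ey1 hy]] := det_eq1_exists ny.
have [ez0 [ez1 hz]] := det_eq1_exists nz.
have dx : wx*ex0*x1 - wx*ex1*x0 = wx by rewrite -[RHS]mulr1 -hx; ring.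
have dy : wy*ey0*y1 - wy*ey1*y0 = wy by rewrite -[RHS]mulr1 -hy; ring.
have dz : wz*ez0*z1 - wz*ez1*z0 = wz by rewrite -[RHS]mulr1 -hz; ring.
exists (wx*ex0), (wx*ex1), (wy*ey0), (wy*ey1), (wz*ez0), (wz*ez1).
rewrite (sec0_z HM) (sec0_y HM) (sec1_z HM) (sec1_x HM) (sec2_y HM) (sec2_x HM) dx dy dz.
by split.
Qed.

Lemma zero_unique_over_root x'0 x'1 y'0 y'1 z'0 z'1 : tangent_det al be ga de ep ze != 0 ->
  nonzero2 x0 x1 -> nonzero2 y0 y1 -> nonzero2 z0 z1 -> zero_coords x'0 x'1 y'0 y'1 z'0 z'1 ->
  z'0 * z1 - z'1 * z0 = 0 ->
  [/\ proportional2 x0 x1 x'0 x'1, proportional2 y0 y1 y'0 y'1 & proportional2 z0 z1 z'0 z'1].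
Proof.
move=> hK nx ny nz [nx' ny' nz' [f0 f1 f2]] dz.
have pz := det2_eq0_proportional nz nz' dz; have [cz [cz0 ez0 ez1]] := pz.
have f0' : sec0 v y'0 y'1 z0 z1 = 0.
  by apply: (mulfI cz0); rewrite mulr0 -f0 ez0 ez1 /sec0; ring.
have f1' : sec1 v x'0 x'1 z0 z1 = 0.
  by apply: (mulfI cz0); rewrite mulr0 -f1 ez0 ez1 /sec1; ring.
have : (al * ep != 0) || (ga * ze != 0).
  apply: contraNT hK; rewrite negb_or !negbK => /andP[/eqP h1 /eqP h2]; apply/eqP.
  have -> : tangent_det al be ga de ep ze = de * (al * ep) + be * (ga * ze).
    by rewrite /tangent_det; ring.
  by rewrite h1 h2 !mulr0 addr0.
case/orP; rewrite mulf_eq0 negb_or => /andP[h1 h2].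
- have py : proportional2 y0 y1 y'0 y'1.
    apply: det2_eq0_proportional => //.
    by apply: (mulfI h1); rewrite mulr0 -(sec0_z HM) f0'.
  have [cy [cy0 ey0 ey1]] := py.
  have f2' : sec2 v x'0 x'1 y0 y1 = 0.
    by apply: (mulfI cy0); rewrite mulr0 -f2 ey0 ey1 /sec2; ring.
  split=> //; apply: det2_eq0_proportional => //.
  by apply: (mulfI h2); rewrite mulr0 -(sec2_y HM) f2'.
- have px : proportional2 x0 x1 x'0 x'1.
    apply: det2_eq0_proportional => //.
    by apply: (mulfI h1); rewrite mulr0 -(sec1_z HM) f1'.
  have [cx [cx0 ex0 ex1]] := px.
  have f2' : sec2 v x0 x1 y'0 y'1 = 0.
    by apply: (mulfI cx0); rewrite mulr0 -f2 ex0 ex1 /sec2; ring.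
  split=> //; apply: det2_eq0_proportional => //.
  by apply: (mulfI h2); rewrite mulr0 -(sec2_x HM) f2'.
Qed.

End AtAZero.

Lemma discr_eq0_of_three_roots (z0 z1 w0 w1 t0 t1 : F) :
  qform v z0 z1 = 0 -> qform v w0 w1 = 0 -> qform v t0 t1 = 0 ->
  z0 * w1 - z1 * w0 != 0 -> z0 * t1 - z1 * t0 != 0 -> w0 * t1 - w1 * t0 != 0 -> discr v = 0.
Proof.
move=> hz hw ht dzw dzt dwt.
have hA : (z0*w1 - z1*w0) * (z0*t1 - z1*t0) * (w0*t1 - w1*t0) != 0 by rewrite !mulf_neq0.
have cancel (t : F) : (z0*w1 - z1*w0) * (z0*t1 - z1*t0) * (w0*t1 - w1*t0) * t = 0 -> t = 0.
  by move/eqP; rewrite mulf_eq0 (negbTE hA) => /eqP.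
case: (qcoef_interpolation v z0 z1 w0 w1 t0 t1) => /=.
rewrite hz hw ht !mulr0 ?subr0 ?addr0 => /cancel k0 /cancel k1 /cancel k2.
by rewrite /discr k0 k1 k2; ring.
Qed.

Lemma zero_over_root (z0 z1 : F) : nonzero2 z0 z1 -> qform v z0 z1 = 0 ->
  exists x0 x1 y0 y1, zero_coords x0 x1 y0 y1 z0 z1.
Proof.
move=> nz hq.
have [hY|] := boolP (nonzero2 (V 0*z0 + V 1*z1) (V 2*z0 + V 3*z1)).
  have ny : nonzero2 (- (V 2*z0 + V 3*z1)) (V 0*z0 + V 1*z1).
    by move: hY; rewrite /nonzero2 oppr_eq0 orbC.
  have [hX|] := boolP (nonzero2 (V 4*z0 + V 5*z1) (V 6*z0 + V 7*z1)).
    have nx : nonzero2 (- (V 6*z0 + V 7*z1)) (V 4*z0 + V 5*z1).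
      by move: hX; rewrite /nonzero2 oppr_eq0 orbC.
    exists (- (V 6*z0 + V 7*z1)), (V 4*z0 + V 5*z1), (- (V 2*z0 + V 3*z1)), (V 0*z0 + V 1*z1).
    by split=> //; split; [rewrite /sec0; ring | rewrite /sec1; ring | rewrite -qform_sec2].
  rewrite negb_or !negbK => /andP[/eqP q0 /eqP q1].
  have [a0 [a1 [na ha]]] := orthogonal_exists
    (V 8 * (- (V 2*z0 + V 3*z1)) + V 9 * (V 0*z0 + V 1*z1))
    (V 10 * (- (V 2*z0 + V 3*z1)) + V 11 * (V 0*z0 + V 1*z1)).
  exists a0, a1, (- (V 2*z0 + V 3*z1)), (V 0*z0 + V 1*z1); split=> //; split.
  - by rewrite /sec0; ring.
  - have -> : sec1 v a0 a1 z0 z1 = a0 * (V 4*z0 + V 5*z1) + a1 * (V 6*z0 + V 7*z1).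
      by rewrite /sec1; ring.
    by rewrite q0 q1; ring.
  - by rewrite -ha /sec2; ring.
rewrite negb_or !negbK => /andP[/eqP p0 /eqP p1].
have [a0 [a1 [na ha]]] := orthogonal_exists (V 4*z0 + V 5*z1) (V 6*z0 + V 7*z1).
have [b0 [b1 [nb hb]]] := orthogonal_exists (V 8*a0 + V 10*a1) (V 9*a0 + V 11*a1).
exists a0, a1, b0, b1; split=> //; split.
- have -> : sec0 v b0 b1 z0 z1 = b0 * (V 0*z0 + V 1*z1) + b1 * (V 2*z0 + V 3*z1).
    by rewrite /sec0; ring.
  by rewrite p0 p1; ring.
- by rewrite -ha /sec1; ring.
- by rewrite -hb /sec2; ring.
Qed.

End Zeros.

Section ClosedField.
Variables (C : numClosedFieldType) (v : 'I_12 -> C).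

Lemma qform_root_exists : exists z0 z1 : C, nonzero2 z0 z1 /\ qform v z0 z1 = 0.
Proof.
have [k0|k0] := eqVneq (qcoef0 v) 0.
  by exists 1, 0; rewrite /nonzero2 oner_eq0 /qform k0; split=> //; ring.
pose s := sqrtC (discr v).
have hs : s ^+ 2 = discr v by rewrite sqrtCK.
have h2 : (2%:R : C) != 0 by rewrite pnatr_eq0.
exists ((- qcoef1 v + s) / (2%:R * qcoef0 v)), 1; split; first by rewrite /nonzero2 oner_eq0 orbT.
rewrite /qform (_ : _ + _ = (s ^+ 2 - discr v) / (4%:R * qcoef0 v)).
  by rewrite hs subrr mul0r.
by rewrite /discr; field.
Qed.

Lemma qgrad_common_zero : discr v = 0 ->
  exists z0 z1 : C, [/\ nonzero2 z0 z1, qgrad0 v z0 z1 = 0 & qgrad1 v z0 z1 = 0].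
Proof.
move=> hD; have [k1|k1] := eqVneq (qcoef1 v) 0; last first.
  exists (qcoef1 v), (- (2%:R * qcoef0 v)); split; first by rewrite /nonzero2 k1.
  - by rewrite /qgrad0; ring.
  - by rewrite -hD /qgrad1 /discr; ring.
have : 4%:R * (qcoef0 v * qcoef2 v) = 0 by rewrite -oppr0 -hD /discr k1; ring.
move/eqP; rewrite mulf_eq0 pnatr_eq0 /= mulf_eq0 => /orP[/eqP k0|/eqP k2].
- by exists 1, 0; rewrite /nonzero2 oner_eq0 /qgrad0 /qgrad1 k0 k1; split=> //; ring.
- by exists 0, 1; rewrite /nonzero2 oner_eq0 orbT /qgrad0 /qgrad1 k2 k1; split=> //; ring.
Qed.

End ClosedField.

Lemma ord2E (a : 'I_2) : a = inord 0 \/ a = inord 1.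
Proof. by case: a => [[|[|//]] H]; [left|right]; apply: val_inj; rewrite /= inordK. Qed.

Lemma ord3E (a : 'I_3) : [\/ a = inord 0, a = inord 1 | a = inord 2].
Proof.
by case: a => [[|[|[|//]]] H]; [apply: Or31|apply: Or32|apply: Or33];
  apply: val_inj; rewrite /= inordK.
Qed.

Section Coordinates.
Variables (F : fieldType) (v : 'I_12 -> F).

Lemma bilE (i : nat) x y : (i < 3)%N -> bil v (inord i) x y =
    v (inord (4*i)) * x (inord 0) * y (inord 0) + v (inord (4*i+1)) * x (inord 0) * y (inord 1)
  + (v (inord (4*i+2)) * x (inord 1) * y (inord 0)
     + v (inord (4*i+3)) * x (inord 1) * y (inord 1)).
Proof.
move=> hi; have ord2_inord (k : 'I_2) : k = inord k by rewrite inord_val.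
rewrite /bil !big_ord_recl !big_ord0 !addr0 /vidx [ord0]ord2_inord [lift _ _]ord2_inord /=.
rewrite !inordK //.
by rewrite !muln0 !addn0 muln1 -addnA.
Qed.

Definition coord (p : Pt F) (l a : nat) := p (inord l) (inord a).

Lemma fsecE p : [/\
  fsec v (inord 0) p = sec0 v (coord p 1 0) (coord p 1 1) (coord p 2 0) (coord p 2 1),
  fsec v (inord 1) p = sec1 v (coord p 0 0) (coord p 0 1) (coord p 2 0) (coord p 2 1) &
  fsec v (inord 2) p = sec2 v (coord p 0 0) (coord p 0 1) (coord p 1 0) (coord p 1 1)].
Proof. by rewrite /fsec /oth1 /oth2 /= !inordK //= !bilE. Qed.

Lemma dfsecE p u : [/\
  dfsec v (inord 0) p u = sec0 v (coord u 1 0) (coord u 1 1) (coord p 2 0) (coord p 2 1)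
                         + sec0 v (coord p 1 0) (coord p 1 1) (coord u 2 0) (coord u 2 1),
  dfsec v (inord 1) p u = sec1 v (coord u 0 0) (coord u 0 1) (coord p 2 0) (coord p 2 1)
                         + sec1 v (coord p 0 0) (coord p 0 1) (coord u 2 0) (coord u 2 1) &
  dfsec v (inord 2) p u = sec2 v (coord u 0 0) (coord u 0 1) (coord p 1 0) (coord p 1 1)
                         + sec2 v (coord p 0 0) (coord p 0 1) (coord u 1 0) (coord u 1 1)].
Proof. by rewrite /dfsec /oth1 /oth2 /= !inordK //= !bilE. Qed.

Lemma nonzero2E (p : Pt F) l :
  (exists a, p l a != 0) <-> nonzero2 (p l (inord 0)) (p l (inord 1)).
Proof.
split; first by case=> a; case: (ord2E a) => -> h; rewrite /nonzero2 h ?orbT.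
by case/orP => h; eexists; exact: h.
Qed.

Lemma is_zeroE p : is_zero v p <->
  zero_coords v (coord p 0 0) (coord p 0 1) (coord p 1 0) (coord p 1 1) (coord p 2 0) (coord p 2 1).
Proof.
have [f0 f1 f2] := fsecE p; split.
- by case=> hn hf; split; rewrite /coord -?nonzero2E // -f0 -f1 -f2.
- case=> n0 n1 n2 [e0 e1 e2]; split.
  + by move=> l; apply/nonzero2E; case: (ord3E l) => ->.
  + by move=> i; case: (ord3E i) => ->; rewrite ?f0 ?f1 ?f2.
Qed.

Definition point_of (x0 x1 y0 y1 z0 z1 : F) : Pt F := fun l a =>
  if val l == 0%N then (if val a == 0%N then x0 else x1)
  else if val l == 1%N then (if val a == 0%N then y0 else y1)
  else (if val a == 0%N then z0 else z1).

Lemma coord_point_of x0 x1 y0 y1 z0 z1 : let p := point_of x0 x1 y0 y1 z0 z1 in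
  [/\ coord p 0 0 = x0, coord p 0 1 = x1, coord p 1 0 = y0, coord p 1 1 = y1
    & coord p 2 0 = z0 /\ coord p 2 1 = z1].
Proof. by rewrite /coord /point_of /= !inordK. Qed.

Lemma is_zero_point_of x0 x1 y0 y1 z0 z1 :
  zero_coords v x0 x1 y0 y1 z0 z1 -> is_zero v (point_of x0 x1 y0 y1 z0 z1).
Proof. by rewrite is_zeroE; have [-> -> -> -> [-> ->]] := coord_point_of x0 x1 y0 y1 z0 z1. Qed.

End Coordinates.

Section ZeroScheme.
Variables (F : fieldType) (v : 'I_12 -> F).

Lemma coord_det2_eq0_multiple (p u : Pt F) (l : 'I_3) :
  nonzero2 (p l (inord 0)) (p l (inord 1)) ->
  u l (inord 0) * p l (inord 1) - u l (inord 1) * p l (inord 0) = 0 ->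
  exists c, forall a, u l a = c * p l a.
Proof.
by move=> np /(det2_eq0_multiple np) [c [e0 e1]]; exists c => a; case: (ord2E a) => ->.
Qed.

Lemma reduced_at_zero p : discr v != 0 -> is_zero v p -> reduced_at v p.
Proof.
move=> hD /is_zeroE hz u hu.
have [al [be [ga [de [ep [ze HM]]]]]] := multipliers_exist hz.
have [nx ny nz _] := hz; have [d0 d1 d2] := dfsecE v p u.
have := hu (inord 0); have := hu (inord 1); have := hu (inord 2); rewrite d0 d1 d2 => e2 e1 e0.
have [dx dy dz] := tangent_vector_trivial HM (tangent_det_neq0 HM nz hD) e0 e1 e2.
by move=> l; case: (ord3E l) => ->; apply: coord_det2_eq0_multiple.
Qed.

Lemma proj_eq_of_zeros p q : discr v != 0 -> is_zero v p -> is_zero v q ->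
  coord q 2 0 * coord p 2 1 - coord q 2 1 * coord p 2 0 = 0 -> proj_eq p q.
Proof.
move=> hD /is_zeroE hp /is_zeroE hq hd.
have [al [be [ga [de [ep [ze HM]]]]]] := multipliers_exist hp.
have [nx ny nz _] := hp.
have [px py pz] := zero_unique_over_root HM (tangent_det_neq0 HM nz hD) nx ny nz hq hd.
move=> l; case: (ord3E l) => ->; [case: px | case: py | case: pz] => c [c0 e0 e1];
  by exists c; split=> // a; case: (ord2E a) => ->.
Qed.

Lemma qform_at_zero p : is_zero v p -> qform v (coord p 2 0) (coord p 2 1) = 0.
Proof.
move=> /is_zeroE hp; have [al [be [ga [de [ep [ze HM]]]]]] := multipliers_exist hp.
by case: hp => _ _ _ [_ _ /(qform_multipliers HM)].
Qed.

(* Distinct zeros lie over distinct roots of [qform], which has at most two of them. *)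
Lemma no_three_zeros p1 p2 p3 : discr v != 0 ->
  is_zero v p1 -> is_zero v p2 -> is_zero v p3 ->
  ~ proj_eq p1 p2 -> ~ proj_eq p1 p3 -> ~ proj_eq p2 p3 -> False.
Proof.
move=> hD h1 h2 h3 n12 n13 n23.
have det_neq0 p q : is_zero v p -> is_zero v q -> ~ proj_eq p q ->
    coord p 2 0 * coord q 2 1 - coord p 2 1 * coord q 2 0 != 0.
  move=> hp hq npq; apply/eqP => e; apply: npq; apply: (proj_eq_of_zeros hD hp hq).
  by rewrite -[RHS]oppr0 -e; ring.
move/eqP: hD; apply.
by apply: (discr_eq0_of_three_roots (qform_at_zero h1) (qform_at_zero h2) (qform_at_zero h3));
  apply: det_neq0.
Qed.

Lemma reduced_at_det0 p u : reduced_at v p -> (forall i, dfsec v i p u = 0) ->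
  forall l, coord u l 0 * coord p l 1 - coord u l 1 * coord p l 0 = 0.
Proof. by move=> hred hu l; have [c hc] := hred u hu (inord l); rewrite /coord !hc; ring. Qed.

Lemma not_reduced_of_tangent_det0 x0 x1 y0 y1 z0 z1 al be ga de ep ze :
  zero_coords v x0 x1 y0 y1 z0 z1 -> multipliers v x0 x1 y0 y1 z0 z1 al be ga de ep ze ->
  tangent_det al be ga de ep ze = 0 -> ~ reduced_at v (point_of x0 x1 y0 y1 z0 z1).
Proof.
move=> [nx ny nz _] HM hK hred.
have [ux0 [ux1 [uy0 [uy1 [uz0 [uz1 [e0 e1 e2]]]]]]] := tangent_vector_nontrivial HM hK nx ny nz.
pose p := point_of x0 x1 y0 y1 z0 z1; pose u := point_of ux0 ux1 uy0 uy1 uz0 uz1.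
have [px0 px1 py0 py1 [pz0 pz1]] := coord_point_of x0 x1 y0 y1 z0 z1.
have [ux0E ux1E uy0E uy1E [uz0E uz1E]] := coord_point_of ux0 ux1 uy0 uy1 uz0 uz1.
have [d0 d1 d2] := dfsecE v p u.
have hu i : dfsec v i p u = 0.
  by case: (ord3E i) => ->; rewrite ?d0 ?d1 ?d2 /p /u ?px0 ?px1 ?py0 ?py1 ?pz0 ?pz1
    ?ux0E ?ux1E ?uy0E ?uy1E ?uz0E ?uz1E.
have det0 := reduced_at_det0 hred hu.
have := det0 0%N; have := det0 1%N; have := det0 2%N.
rewrite /p /u px0 px1 py0 py1 pz0 pz1 ux0E ux1E uy0E uy1E uz0E uz1E => -> -> ->.
by rewrite eqxx.
Qed.

End ZeroScheme.

Section Discriminant.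
Variables (C : numClosedFieldType) (v : 'I_12 -> C).

Lemma zero_exists : exists p, is_zero v p.
Proof.
have [z0 [z1 [nz hq]]] := qform_root_exists v.
have [x0 [x1 [y0 [y1 hz]]]] := zero_over_root nz hq.
by exists (point_of x0 x1 y0 y1 z0 z1); apply: is_zero_point_of.
Qed.

Lemma zero_dim_reduced_of_discr : discr v != 0 -> zero_dim_reduced v.
Proof.
move=> hD; have [p1 h1] := zero_exists.
split; [by exists p1 | | by move=> p; apply: reduced_at_zero].
have [[p2 [h2 n12]]|] := classic (exists p2, is_zero v p2 /\ ~ proj_eq p1 p2).
  exists 2%N, (fun k => if val k == 0%N then p1 else p2) => p hp.
  have [e1|n1] := classic (proj_eq p1 p); first by exists (inord 0); rewrite /= inordK.
  have [e2|n2] := classic (proj_eq p2 p); first by exists (inord 1); rewrite /= inordK.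
  by case: (no_three_zeros hD h1 h2 hp n12 n1 n2).
move=> hn; exists 1%N, (fun _ => p1) => p hp; exists ord0.
by apply: NNPP => np; apply: hn; exists p.
Qed.

(* A double root [z] of [qform] carries a zero of [f] whose tangent determinant vanishes. *)
Lemma not_zero_dim_reduced_of_discr : discr v = 0 -> ~ zero_dim_reduced v.
Proof.
move=> hD [_ _ hred].
have [z0 [z1 [nz g0 g1]]] := qgrad_common_zero hD.
have hq : qform v z0 z1 = 0.
  have two : (2%:R : C) != 0 by rewrite pnatr_eq0.
  by apply: (mulfI two); rewrite mulr0 -qform_euler g0 g1; ring.
have [x0 [x1 [y0 [y1 hz]]]] := zero_over_root nz hq.
have [al [be [ga [de [ep [ze HM]]]]]] := multipliers_exist hz.
have hK : tangent_det al be ga de ep ze = 0.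
  apply: (nonzero2_mul_eq0 nz).
  - by rewrite -oppr0 -(qgrad1_multipliers HM) g1; ring.
  - by rewrite -(qgrad0_multipliers HM) g0; ring.
exact: (not_reduced_of_tangent_det0 hz HM hK (hred _ (is_zero_point_of hz))).
Qed.

Lemma in_discriminantE : in_discriminant v <-> discr v = 0.
Proof.
split; last exact: not_zero_dim_reduced_of_discr.
by move=> hn; apply: NNPP => /eqP hD; apply/hn/zero_dim_reduced_of_discr.
Qed.

End Discriminant.

Section PartialDegree.
Variable n : nat.

Definition mdeg_on_fun (P : pred 'I_n) (m : 'X_{1..n}) : nat := (\sum_(i < n | P i) m i)%N.

Lemma mdeg_on_fun0 P : mdeg_on_fun P 0%MM = 0%N.
Proof. by rewrite /mdeg_on_fun big1 // => i _; rewrite mnm0E. Qed.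

Lemma mdeg_on_funD P : {morph mdeg_on_fun P : m1 m2 / (m1 + m2)%MM >-> (m1 + m2)%N}.
Proof.
by move=> m1 m2; rewrite /mdeg_on_fun -big_split /=; apply: eq_bigr => i _; rewrite mnmDE.
Qed.

HB.instance Definition _ P := isMeasure.Build n (mdeg_on_fun P) (mdeg_on_fun0 P) (mdeg_on_funD P).

Definition mdeg_on P : measure n := Measure.clone n (mdeg_on_fun P) _.

Lemma mdeg_onE P m : mdeg_on P m = (\sum_(i < n | P i) m i)%N.
Proof. by []. Qed.

Lemma mdeg_onU P (i : 'I_n) : mdeg_on P U_(i)%MM = P i.
Proof.
rewrite mdeg_onE big_mkcond (bigD1 i) //= mnm1E eqxx big1 ?addn0; first by case: (P i).
by move=> j hj; rewrite mnm1E (eq_sym i) (negbTE hj); case: (P j).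
Qed.

Lemma mdeg_on_eq0 P m i : mdeg_on P m = 0%N -> P i -> m i = 0%N.
Proof. by move/eqP; rewrite mdeg_onE sum_nat_eq0 => /forall_inP h /h /eqP. Qed.

Lemma mdeg_on_eq1 P m : mdeg_on P m = 1%N ->
  exists j, [/\ P j, m j = 1%N & forall i, P i -> i != j -> m i = 0%N].
Proof.
move=> h; have [j /andP[Pj mj]] : exists j, P j && (m j != 0%N).
  apply/existsP; apply: contraT => /existsPn hn.
  by move: h; rewrite mdeg_onE big1 // => i Pi; move: (hn i); rewrite Pi negbK => /eqP.
move: h; rewrite mdeg_onE (bigD1 j) //=; set S := (\sum_(i < n | _) _)%N => h.
have S0 : S == 0%N by move: mj h; lia.
exists j; split=> //; first by move: mj h; lia.
move=> i Pi ij; move: S0; rewrite sum_nat_eq0 => /forall_inP /(_ i).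
by rewrite Pi ij => /(_ isT) /eqP.
Qed.

End PartialDegree.

Section Evaluation.
Variables (n : nat) (R : comNzRingType).
Implicit Types (p : {mpoly R[n]}) (x y z : 'I_n -> R).

Lemma meval_eq_on p x y : (forall m i, m \in msupp p -> x i != y i -> m i = 0%N) ->
  p.@[x] = p.@[y].
Proof.
move=> h; rewrite !mevalE; apply: eq_big_seq => m hm; congr (_ * _).
apply: eq_bigr => i _; have [-> //|ne] := eqVneq (x i) (y i).
by rewrite h // !expr0.
Qed.

Lemma meval_dhomog0_on (P : pred 'I_n) p x y : p \is 0.-homog for (mdeg_on P) ->
  (forall i, ~~ P i -> x i = y i) -> p.@[x] = p.@[y].
Proof.
move=> hp hxy; apply: meval_eq_on => m i hm; have [Pi|/hxy->] := boolP (P i); last by rewrite eqxx.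
by move=> _; apply: mdeg_on_eq0 Pi; apply: dhomog_mf hm.
Qed.

Lemma meval_dhomog1_on (P : pred 'I_n) p x y z (a b : R) : p \is 1.-homog for (mdeg_on P) ->
  (forall i, ~~ P i -> x i = z i /\ y i = z i) -> (forall i, P i -> z i = a * x i + b * y i) ->
  p.@[z] = a * p.@[x] + b * p.@[y].
Proof.
move=> hp hoff hon; rewrite !mevalE !mulr_sumr -big_split /=.
apply: eq_big_seq => m hm.
have [j [Pj mj m0]] := mdeg_on_eq1 (dhomog_mf hp hm).
pose G := \prod_(i < n | i != j) (if P i then 1 else z i ^+ m i).
have hG t : (forall i, ~~ P i -> t i = z i) -> \prod_(i < n | i != j) t i ^+ m i = G.
  move=> ht; apply: eq_bigr => i ij; case Pi: (P i); first by rewrite m0 ?expr0.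
  by rewrite ht ?Pi.
rewrite (bigD1 j) //= (bigD1 j (P := predT)) //= (bigD1 j (P := predT)) //=.
rewrite !hG ?mj ?expr1 ?hon //; last by move=> i /hoff [].
- ring.
- by move=> i /hoff [].
Qed.

End Evaluation.

Section LeadingForm.
Variables (n : nat) (R : idomainType) (mf : measure n).
Local Notation msz p := (mmeasure mf p).
Implicit Types (p f g D : {mpoly R[n]}).

Definition lead_form p := pihomog mf (msz p).-1 p.

Lemma lead_form_homog p : lead_form p \is (msz p).-1.-homog for mf.
Proof. exact: pihomogP. Qed.

Lemma lead_form_dhomog (mf' : measure n) e p :
  p \is e.-homog for mf' -> lead_form p \is e.-homog for mf'.
Proof.
move=> h; rewrite /lead_form pihomogE big_seq_cond; apply: rpred_sum => m /andP[hm _].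
by apply: rpredZ; rewrite dhomogX (dhomog_mf h hm).
Qed.

Lemma mmeasure_dhomog d p : p \is d.-homog for mf -> (msz p <= d.+1)%N.
Proof.
move=> h; rewrite mmeasureE; apply/bigmax_leqP_seq => m hm _.
by rewrite (dhomog_mf h hm).
Qed.

Lemma lead_form_neq0 p : p != 0 -> lead_form p != 0.
Proof.
move=> hp; apply/eqP => ht.
have hK := mpolySpred mf hp; set K := (msz p).-1 in hK ht.
have e : p = \sum_(d < K.+1) pihomog mf d p by apply: pihomog_partitionE; rewrite hK.
rewrite big_ord_recr /= [pihomog mf K p]ht addr0 in e.
have : (msz p <= K)%N.
  rewrite {1}e; apply: leq_trans (mmeasure_sum mf _ _ _) _.
  apply/bigmax_leqP => i _; apply: leq_trans (mmeasure_dhomog (pihomogP _ _ _)) _.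
  exact: ltn_ord.
by rewrite hK ltnn.
Qed.

Lemma pihomogM f g a b : (msz f <= a.+1)%N -> (msz g <= b.+1)%N ->
  pihomog mf (a + b) (f * g) = pihomog mf a f * pihomog mf b g.
Proof.
move=> hf hg.
rewrite {1}(pihomog_partitionE hf) {1}(pihomog_partitionE hg) big_distrlr /= raddf_sum /=.
have e (i : 'I_a.+1) (j : 'I_b.+1) : pihomog mf (a + b) (pihomog mf i f * pihomog mf j g) =
    if (i + j == a + b)%N then pihomog mf i f * pihomog mf j g else 0.
  have hij := dhomogM (pihomogP mf i f) (pihomogP mf j g).
  case: eqP => [<-|ne]; first exact: pihomog_dE.
  by apply: pihomog_ne0 hij; apply/eqP.
under eq_bigr => i _ do (rewrite raddf_sum /=; under eq_bigr => j _ do rewrite e).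
rewrite (bigD1 ord_max) //= (bigD1 ord_max) //= eqxx big1 ?addr0; last first.
  move=> j hj; case: eqP => // h; exfalso; move: hj; rewrite -(inj_eq val_inj) /=.
  by have := ltn_ord j; lia.
rewrite big1 ?addr0 // => i hi; rewrite big1 // => j _; case: eqP => // h; exfalso; move: hi.
by rewrite -(inj_eq val_inj) /=; have := ltn_ord i; have := ltn_ord j; lia.
Qed.

Lemma lead_formM f g D d : D \is d.-homog for mf -> f * g = D -> f != 0 -> g != 0 ->
  lead_form f * lead_form g = D.
Proof.
move=> hD e hf hg.
have hm := pihomogM (eq_leq (mpolySpred mf hf)) (eq_leq (mpolySpred mf hg)).
have nz : lead_form f * lead_form g != 0 by rewrite mulf_neq0 ?lead_form_neq0.
have hd : ((msz f).-1 + (msz g).-1)%N = d.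
  apply/eqP; apply: contraNT nz => ne.
  by rewrite /lead_form -hm e (pihomog_ne0 _ hD) // eq_sym.
by rewrite /lead_form -hm e hd pihomog_dE.
Qed.

End LeadingForm.

Definition blk (k : nat) (i : 'I_12) : bool := (4 * k <= i < 4 * k + 4)%N.
Local Notation bdeg k := (mdeg_on (blk k)).

Lemma blk_cover (i : 'I_12) : [|| blk 0 i, blk 1 i | blk 2 i].
Proof. by rewrite /blk; case: i => i /= hi; lia. Qed.

Lemma mdeg_blocks (m : 'X_{1..12}) : mdeg m = (bdeg 0 m + bdeg 1 m + bdeg 2 m)%N.
Proof.
rewrite mdegE !mdeg_onE !(big_mkcond (fun i => blk _ i)) -!big_split /=.
by apply: eq_bigr => -[i hi] _; rewrite /blk /=; do 3 case: ifP; lia.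
Qed.

Section DiscriminantPolynomial.
Variable R : comNzRingType.

Local Notation X := (fun i : 'I_12 => 'X_i : {mpoly R[12]}).

Definition discr_poly : {mpoly R[12]} := discr X.

Lemma meval_discr_poly (x : 'I_12 -> R) : discr_poly.@[x] = discr x.
Proof.
rewrite /discr_poly /discr /qcoef0 /qcoef1 /qcoef2.
by rewrite !expr2 !(mevalB, mevalD, mevalM, mevalMn, meval1, mevalXU).
Qed.

Lemma discr_poly_dhomog (mf : measure 12) a b c :
  (forall i : nat, (i < 4)%N -> mf U_(inord i)%MM = a) ->
  (forall i : nat, (4 <= i < 8)%N -> mf U_(inord i)%MM = b) ->
  (forall i : nat, (8 <= i < 12)%N -> mf U_(inord i)%MM = c) ->
  discr_poly \is ((a + b + c) * 2).-homog for mf.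
Proof.
move=> ha hb hc.
have hX i j k : (i < 4)%N -> (4 <= j < 8)%N -> (8 <= k < 12)%N ->
    ('X_(inord i) * 'X_(inord j) * 'X_(inord k) : {mpoly R[12]}) \is (a + b + c).-homog for mf.
  move=> hi hj hk; apply: dhomogM; first apply: dhomogM.
  - by rewrite dhomogX ha.
  - by rewrite dhomogX hb.
  - by rewrite dhomogX hc.
have hq : [/\ qcoef0 X \is (a + b + c).-homog for mf, qcoef1 X \is (a + b + c).-homog for mf &
    qcoef2 X \is (a + b + c).-homog for mf].
  by split; rewrite /qcoef0 /qcoef1 /qcoef2 /=; repeat (apply: rpredB || apply: rpredD); apply: hX.
have [h0 h1 h2] := hq; rewrite /discr_poly /discr; apply: rpredB; first exact: dhomogMn.
rewrite -mulrA mulr_natl muln2 -addnn; apply: rpredMn; exact: dhomogM.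
Qed.

Lemma discr_poly_homog : discr_poly \is 6.-homog.
Proof. by apply: (@discr_poly_dhomog mdeg 1 1 1) => i _; exact: mdeg1. Qed.

Lemma discr_poly_bdeg k : (k < 3)%N -> discr_poly \is 2.-homog for (bdeg k).
Proof.
move=> hk; have := @discr_poly_dhomog (bdeg k) (k == 0)%N (k == 1)%N (k == 2)%N.
have -> : (((k == 0) + (k == 1) + (k == 2)) * 2 = 2)%N by case: k hk => [|[|[|]]].
by apply=> i hi; rewrite mdeg_onU /blk inordK; try lia; case: k hk => [|[|[|]]] //= _; lia.
Qed.

End DiscriminantPolynomial.
Arguments discr_poly {R}.
Arguments discr_poly_homog {R}.
Arguments discr_poly_bdeg {R k}.

Section Irreducibility.
Variable F : fieldType.
(* In characteristic 2, [discr] is the square [qcoef1 ^+ 2]. *)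
Hypothesis two_neq0 : (2%:R : F) != 0.
Implicit Types (p f g h : {mpoly F[12]}).

Definition splice (k : nat) (c s : seq F) : 'I_12 -> F :=
  fun i => if blk k i then nth 0 s (i - 4 * k) else nth 0 c i.

Lemma meval_splice_lin k p c (a b d : F) : p \is 1.-homog for (bdeg k) ->
  p.@[splice k c [:: a; b; 0; d]] = a * p.@[splice k c [:: 1; 0; 0; 0]]
    + b * p.@[splice k c [:: 0; 1; 0; 0]] + d * p.@[splice k c [:: 0; 0; 0; 1]].
Proof.
move=> hp.
have lin sx sy sz (x y : F) :
    (forall l, (l < 4)%N -> nth 0 sz l = x * nth 0 sx l + y * nth 0 sy l) ->
    p.@[splice k c sz] = x * p.@[splice k c sx] + y * p.@[splice k c sy].
  move=> hs; apply: (meval_dhomog1_on hp) => i hb; rewrite /splice.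
  - by rewrite (negbTE hb).
  - by rewrite hb hs //; move: hb; rewrite /blk; lia.
rewrite (lin [:: a; b; 0; 0] [:: 0; 0; 0; 1] _ 1 d); last by case=> [|[|[|[|]]]] //= _; ring.
rewrite (lin [:: 1; 0; 0; 0] [:: 0; 1; 0; 0] _ a b); last by case=> [|[|[|[|]]]] //= _; ring.
ring.
Qed.

Lemma meval_splice_base k h c c' s :
  (forall j, (j < 3)%N -> j != k -> h \is 0.-homog for (bdeg j)) ->
  h.@[splice k c s] = h.@[splice k c' s].
Proof.
move=> hh; apply: meval_eq_on => m i hm; rewrite /splice.
case: ifP => [_|hk _]; first by rewrite eqxx.
have [j hj /andP[hb hjk]] : exists2 j, (j < 3)%N & blk j i && (j != k).
  by case/or3P: (blk_cover i) => hb; [exists 0%N | exists 1%N | exists 2%N] => //;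
    rewrite hb; apply: contraFneq hk => <-.
exact: mdeg_on_eq0 (dhomog_mf (hh j hj hjk) hm) hb.
Qed.

Lemma meval_splice_block k g c s s' : g \is 0.-homog for (bdeg k) ->
  g.@[splice k c s] = g.@[splice k c s'].
Proof. by move=> hg; apply: (meval_dhomog0_on hg) => i /negbTE hb; rewrite /splice hb. Qed.

Lemma conic_not_product (Au At Aw Bu Bt Bw : F) :
  ~ (forall a b d,
       (Au * a + At * b + Aw * d) * (Bu * a + Bt * b + Bw * d) = b ^+ 2 - 4%:R * a * d).
Proof.
move=> h.
have coef a b d r : b ^+ 2 - 4%:R * a * d = r ->
    (Au * a + At * b + Aw * d) * (Bu * a + Bt * b + Bw * d) = r by move=> <-.
have uu : Au * Bu = 0 by rewrite -(coef 1 0 0 0); ring.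
have ww : Aw * Bw = 0 by rewrite -(coef 0 0 1 0); ring.
have tt : At * Bt = 1 by rewrite -(coef 0 1 0 1); ring.
have uw : (Au + Aw) * (Bu + Bw) = - 4%:R by rewrite -(coef 1 0 1 (- 4%:R)); ring.
have ut : Au * Bt + At * Bu = 0.
  have : (Au + At) * (Bu + Bt) = 1 by rewrite -(coef 1 1 0 1); ring.
  have -> : (Au + At) * (Bu + Bt) = Au * Bt + At * Bu + Au * Bu + At * Bt by ring.
  by rewrite uu tt addr0 -{2}[1]add0r => /addIr.
have t0 : At != 0 by apply: contra_eq_neq tt => ->; rewrite mul0r eq_sym oner_eq0.
have b0 : Bt != 0 by apply: contra_eq_neq tt => ->; rewrite mulr0 eq_sym oner_eq0.
have [Au0 Bu0] : Au = 0 /\ Bu = 0.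
  move/eqP: uu; rewrite mulf_eq0 => /orP[/eqP a0|/eqP b0']; split=> //; apply/eqP.
  - by move: ut; rewrite a0 mul0r add0r => /eqP; rewrite mulf_eq0 (negbTE t0).
  - by move: ut; rewrite b0' mulr0 addr0 => /eqP; rewrite mulf_eq0 (negbTE b0) orbF.
have four : (4%:R : F) != 0 by rewrite -[4%N]/(2 * 2)%N natrM mulf_neq0.
by move: uw; rewrite Au0 Bu0 !add0r ww => /eqP; rewrite eq_sym oppr_eq0 (negbTE four).
Qed.

(* Bases on which [discr] restricts to the smooth conic [b^2 - 4 a d] in block [k]. *)
Definition conic_base (k : nat) : seq F :=
  match k with
  | 0 => [:: 0; 0; 0; 0; 0; 1; 1; 0; 0; 1; 1; 0]
  | 1 => [:: 0; 1; 1; 0; 0; 0; 0; 0; 0; 1; 1; 0]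
  | _ => [:: 0; 1; 1; 0; 0; 1; 1; 0; 0; 0; 0; 0]
  end.

Local Ltac eval_discr := rewrite /discr /qcoef0 /qcoef1 /qcoef2 /splice /blk !inordK //=; ring.

Lemma discr_splice_conic k a b d : (k < 3)%N ->
  discr (splice k (conic_base k) [:: a; b; 0; d]) = b ^+ 2 - 4%:R * a * d.
Proof. by case: k => [|[|[|]]] // _; eval_discr. Qed.

Lemma no_conic_split k f g : (k < 3)%N -> discr_poly = f * g ->
  f \is 1.-homog for (bdeg k) -> g \is 1.-homog for (bdeg k) -> False.
Proof.
move=> hk e hf hg.
pose ev p (s : seq F) := p.@[splice k (conic_base k) s].
apply: (@conic_not_product (ev f [:: 1; 0; 0; 0]) (ev f [:: 0; 1; 0; 0]) (ev f [:: 0; 0; 0; 1])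
  (ev g [:: 1; 0; 0; 0]) (ev g [:: 0; 1; 0; 0]) (ev g [:: 0; 0; 0; 1])) => a b d.
rewrite -(discr_splice_conic a b d hk) -meval_discr_poly e mevalM.
by rewrite (meval_splice_lin _ _ _ _ hf) (meval_splice_lin _ _ _ _ hg) /ev; ring.
Qed.

Definition pure_bases (k : nat) : seq F * seq F :=
  match k with
  | 0 => ([:: 0; 0; 0; 0; 0; 0; 0; 1; 0; 1; 0; 0], [:: 0; 0; 0; 0; 0; 0; 0; 1; 1; 0; 0; 0])
  | 1 => ([:: 0; 0; 0; 1; 0; 0; 0; 0; 0; 0; 1; 0], [:: 0; 0; 0; 1; 0; 0; 0; 0; 1; 0; 0; 0])
  | _ => ([:: 0; 0; 0; 1; 0; 0; 1; 0; 0; 0; 0; 0], [:: 0; 0; 0; 1; 1; 0; 0; 0; 0; 0; 0; 0])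
  end.

Lemma discr_splice_pure k : (k < 3)%N ->
  let c := (pure_bases k).1 in let c' := (pure_bases k).2 in
  [/\ discr (splice k c [:: 1; 0; 0; 0]) = 1, discr (splice k c' [:: 0; 0; 1; 0]) = 1,
      discr (splice k c' [:: 1; 0; 0; 0]) = 0 & discr (splice k c [:: 0; 0; 1; 0]) = 0].
Proof. by case: k => [|[|[|]]] // _; split; eval_discr. Qed.

(* If [discr_poly = h g] with [h] involving only block [k] and [g] not involving it, then
   [discr (c, s) discr (c', s') = discr (c', s) discr (c, s')] for all bases [c, c'] and
   block values [s, s']. *)
Lemma no_block_split k h g : (k < 3)%N -> discr_poly = h * g ->
  (forall j, (j < 3)%N -> j != k -> h \is 0.-homog for (bdeg j)) ->
  g \is 0.-homog for (bdeg k) -> False.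
Proof.
move=> hk e hh hg.
have cross c c' s s' : discr (splice k c s) * discr (splice k c' s') =
    discr (splice k c' s) * discr (splice k c s').
  rewrite -!meval_discr_poly e !mevalM.
  rewrite (meval_splice_base c c' s hh) (meval_splice_base c' c s' hh).
  by rewrite (meval_splice_block c s s' hg) (meval_splice_block c' s' s hg); ring.
have [d1 d2 d3 d4] := discr_splice_pure hk.
have := cross (pure_bases k).1 (pure_bases k).2 [:: 1; 0; 0; 0] [:: 0; 0; 1; 0].
by rewrite d1 d2 d3 d4 mul1r mul0r => /eqP; rewrite oner_eq0.
Qed.

Lemma discr_poly_neq0 : discr_poly != 0 :> {mpoly F[12]}.
Proof.
apply/eqP => e; have [d1 _ _ _] := discr_splice_pure (isT : (0 < 3)%N).
by move: d1; rewrite -meval_discr_poly e meval0 => /eqP; rewrite eq_sym oner_eq0.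
Qed.

Definition trihomog p (a0 a1 a2 : nat) :=
  forall k, (k < 3)%N -> p \is (nth 0%N [:: a0; a1; a2] k).-homog for (bdeg k).

Lemma trihomog_mdeg p d a0 a1 a2 : p != 0 -> p \is d.-homog -> trihomog p a0 a1 a2 ->
  d = (a0 + a1 + a2)%N.
Proof.
move=> p0 hd ha; have hm := mlead_supp p0.
have <- : mdeg (mlead p) = d := dhomog_mf hd hm.
rewrite mdeg_blocks (dhomog_mf (ha 0%N isT) hm) (dhomog_mf (ha 1%N isT) hm).
by rewrite (dhomog_mf (ha 2%N isT) hm).
Qed.

Lemma trihomog0_off k h a0 a1 a2 : trihomog h a0 a1 a2 ->
  (forall j, (j < 3)%N -> j != k -> nth 0%N [:: a0; a1; a2] j = 0%N) ->
  forall j, (j < 3)%N -> j != k -> h \is 0.-homog for (bdeg j).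
Proof. by move=> hh h0 j hj hjk; have := hh j hj; rewrite h0. Qed.

(* Taking leading forms for the total degree and then for each block degree. *)
Lemma trihomog_factorization f g : f * g = discr_poly -> f != 0 -> g != 0 ->
  exists f' g', [/\ f' * g' = discr_poly, f' \is (msize f).-1.-homog,
    g' \is (msize g).-1.-homog, exists a0 a1 a2, trihomog f' a0 a1 a2
    & exists b0 b1 b2, trihomog g' b0 b1 b2].
Proof.
have step (mf : measure 12) d f1 g1 : (discr_poly : {mpoly F[12]}) \is d.-homog for mf ->
    f1 * g1 = discr_poly -> f1 != 0 -> g1 != 0 ->
    [/\ lead_form mf f1 * lead_form mf g1 = discr_poly, lead_form mf f1 != 0
       & lead_form mf g1 != 0].
  by move=> hD e1 f10 g10; rewrite (lead_formM hD e1) ?lead_form_neq0.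
move=> e0 f0 g0.
have [e1 f1 g1] := step _ _ _ _ discr_poly_homog e0 f0 g0.
have [e2 f2 g2] := step _ _ _ _ (discr_poly_bdeg (isT : (0 < 3)%N)) e1 f1 g1.
have [e3 f3 g3] := step _ _ _ _ (discr_poly_bdeg (isT : (1 < 3)%N)) e2 f2 g2.
have [e4 _ _] := step _ _ _ _ (discr_poly_bdeg (isT : (2 < 3)%N)) e3 f3 g3.
have lead_forms_trihomog p : exists a0 a1 a2,
    trihomog (lead_form (bdeg 2) (lead_form (bdeg 1) (lead_form (bdeg 0) p))) a0 a1 a2.
  exists (mmeasure (bdeg 0) p).-1, (mmeasure (bdeg 1) (lead_form (bdeg 0) p)).-1,
    (mmeasure (bdeg 2) (lead_form (bdeg 1) (lead_form (bdeg 0) p))).-1 => -[|[|[|//]]] _ /=.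
  - by do 2 apply: lead_form_dhomog; apply: lead_form_homog.
  - by apply: lead_form_dhomog; apply: lead_form_homog.
  - exact: lead_form_homog.
exists (lead_form (bdeg 2) (lead_form (bdeg 1) (lead_form (bdeg 0) (lead_form mdeg f)))),
  (lead_form (bdeg 2) (lead_form (bdeg 1) (lead_form (bdeg 0) (lead_form mdeg g)))).
by split=> //; do 3 apply: lead_form_dhomog; exact: lead_form_homog.
Qed.

Local Ltac refute_split e hf hg k := first
  [ exact: (no_conic_split (k := k) isT e (hf k isT) (hg k isT))
  | exact: (no_block_split (k := k) isT e
      (trihomog0_off (k := k) hf ltac:(by case=> [|[|[|]]])) (hg k isT)) ].

Lemma no_trihomog_factorization f g a0 a1 a2 b0 b1 b2 : discr_poly = f * g ->
  trihomog f a0 a1 a2 -> trihomog g b0 b1 b2 ->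
  (0 < a0 + a1 + a2)%N -> (0 < b0 + b1 + b2)%N -> False.
Proof.
move=> e hf hg.
have e' : discr_poly = g * f by rewrite e mulrC.
have sum2 k : (k < 3)%N -> (nth 0 [:: a0; a1; a2] k + nth 0 [:: b0; b1; b2] k = 2)%N.
  move=> hk; apply: (dhomog_uniq discr_poly_neq0) (discr_poly_bdeg hk).
  by rewrite e; apply: dhomogM; [apply: hf | apply: hg].
have := sum2 0%N isT; have := sum2 1%N isT; have := sum2 2%N isT => /= s2 s1 s0.
move: hg; have -> : b0 = (2 - a0)%N by lia.
have -> : b1 = (2 - a1)%N by lia.
have -> : b2 = (2 - a2)%N by lia.
have : [&& a0 <= 2, a1 <= 2 & a2 <= 2]%N by lia.
clear s0 s1 s2 sum2.
case: a0 hf => [|[|[|?]]]; case: a1 => [|[|[|?]]]; case: a2 => [|[|[|?]]] => //= hf _ hg _ _;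
first [ by [] | refute_split e hf hg 0%N | refute_split e hf hg 1%N | refute_split e hf hg 2%N
        | refute_split e' hg hf 0%N | refute_split e' hg hf 1%N | refute_split e' hg hf 2%N ].
Qed.

Lemma discr_poly_irreducible : mirreducible (discr_poly : {mpoly F[12]}).
Proof.
split.
  have hm := mlead_supp discr_poly_neq0.
  by have := msize_mdeg_lt hm; rewrite (dhomog_mf discr_poly_homog hm); lia.
move=> q r e; case: (leqP (msize q) 1) => hq; first by left.
case: (leqP (msize r) 1) => hr; first by right.
have q0 : q != 0 by apply: contraTneq hq => ->; rewrite msize0.
have r0 : r != 0 by apply: contraTneq hr => ->; rewrite msize0.
have [f [g [fg hf hg [a0 [a1 [a2 ha]]] [b0 [b1 [b2 hb]]]]]] :=
  trihomog_factorization (esym e) q0 r0.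
have f0 : f != 0 by apply: contra_neq discr_poly_neq0 => f0; rewrite -fg f0 mul0r.
have g0 : g != 0 by apply: contra_neq discr_poly_neq0 => g0; rewrite -fg g0 mulr0.
exfalso; apply: (no_trihomog_factorization (esym fg) ha hb).
- by rewrite -(trihomog_mdeg f0 hf ha); move: hq; case: (msize q) => [|[|]].
- by rewrite -(trihomog_mdeg g0 hg hb); move: hr; case: (msize r) => [|[|]].
Qed.

End Irreducibility.

Theorem theorem3p11 (C : numClosedFieldType) :
  exists D : {mpoly C[12]},
    [/\ D \is 6.-homog,
        mirreducible D
      & forall v : 'I_12 -> C, (exists j, v j != 0) ->
          (in_discriminant v <-> D.@[v] = 0)].
Proof.
exists discr_poly; split; first exact: discr_poly_homog.
- by apply: discr_poly_irreducible; rewrite pnatr_eq0.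
- by move=> v _; rewrite meval_discr_poly; exact: in_discriminantE.
Qed.
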